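(* There is an absolute constant $C$ such that the following holds. Let $x,z\in\mathbb{R}^3$ with $r=|x-z|>0$, and choose Cartesian coordinates in which $x=(-r/2,0,0)$ and $z=(r/2,0,0)$. For $y\in\mathbb{R}^3$ let $\rho=|x-y|+|y-z|$ and let $\theta\in(0,\pi)$, $\phi\in[0,2\pi)$ be the elliptical coordinates of $y$ defined by $$y_1=\tfrac{\rho}{2}\cos\theta,\quad y_2=\tfrac{\sqrt{\rho^2-r^2}}{2}\sin\theta\cos\phi,\quad y_3=\tfrac{\sqrt{\rho^2-r^2}}{2}\sin\theta\sin\phi.$$ Then for every $f\in\mathcal K_2$, $$\int_{\{y:\ \rho\le 2r\}}\frac{|f(y)|\,dy}{r\sqrt{\rho^2-r^2}\,\sin\theta}\le C\|f\|_{\mathcal K_2}.$$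
   Context: $\mathcal K_2$ is the space of functions on $\mathbb{R}^3$ with $\|f\|_{\mathcal K_2}=\sup_{w\in\mathbb{R}^3}\int_{\mathbb{R}^3}\frac{|f(y)|}{|y-w|^2}dy<\infty$. *)

From HB Require Import structures.
From mathcomp Require Import all_boot all_order all_algebra.
From mathcomp Require Import all_classical all_reals all_analysis.
Set Implicit Arguments. Unset Strict Implicit. Unset Printing Implicit Defensive.
Import Order.TTheory GRing.Theory Num.Theory.
Local Open Scope classical_set_scope.
Local Open Scope ring_scope.

Section Defs.
Variable R : realType.

Definition R3 := ((R * R) * R)%type.

Definition leb3 := ((@lebesgue_measure R \x @lebesgue_measure R) \x @lebesgue_measure R)%E.

Definition pt (a b c : R) : R3 := ((a, b), c).
Definition c1 (y : R3) : R := y.1.1.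
Definition c2 (y : R3) : R := y.1.2.
Definition c3 (y : R3) : R := y.2.

Definition dot3 (u v : R3) : R := c1 u * c1 v + c2 u * c2 v + c3 u * c3 v.
Definition sub3 (u v : R3) : R3 := pt (c1 u - c1 v) (c2 u - c2 v) (c3 u - c3 v).
Definition norm3 (u : R3) : R := Num.sqrt (dot3 u u).
Definition dist3 (u v : R3) : R := norm3 (sub3 u v).

Definition K2norm (f : R3 -> R) : \bar R :=
  ereal_sup [set (\int[leb3]_(y in setT) ((`|f y| / (dist3 y w) ^+ 2)%:E))%E
            | w in [set: R3]].

Definition inK2 (f : R3 -> R) : Prop :=
  measurable_fun setT f /\ (K2norm f < +oo)%E.

(* Elliptical coordinates of y relative to the foci x, z (r = |x - z| > 0),
   in the Cartesian frame where x = (-r/2,0,0), z = (r/2,0,0):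
   the first coordinate y_1 is the component of y - (x+z)/2 along (z-x)/r. *)
Definition ell_rho (x z y : R3) : R := dist3 x y + dist3 y z.
Definition ell_y1 (x z y : R3) : R :=
  let r := dist3 x z in
  let m := pt ((c1 x + c1 z) / 2) ((c2 x + c2 z) / 2) ((c3 x + c3 z) / 2) in
  dot3 (sub3 y m) (sub3 z x) / r.
(* theta in (0, pi) with y_1 = (rho/2) cos theta, hence
   cos theta = 2 y_1 / rho and sin theta = sqrt(1 - cos^2 theta) >= 0. *)
Definition ell_cos_theta (x z y : R3) : R := 2 * ell_y1 x z y / ell_rho x z y.
Definition ell_sin_theta (x z y : R3) : R := Num.sqrt (1 - ell_cos_theta x z y ^+ 2).

End Defs.

From HB Require Import structures.
From mathcomp Require Import all_boot all_order all_algebra.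
From mathcomp Require Import all_classical all_reals all_analysis.
From mathcomp Require Import ring lra.
Import measurable_realfun.
Import Order.TTheory GRing.Theory Num.Theory.
Local Open Scope classical_set_scope.
Local Open Scope ring_scope.

(* Let y_1 be the coordinate of y along the focal axis, delta its distance to
   that axis and w(t) the point of the axis with coordinate t.  Then
   r sqrt(rho^2 - r^2) sin theta = 2 r delta and
   |y - w(t)|^2 = delta^2 + (t - y_1)^2, so integrating over the window
   |t - y_1| <= delta gives 1 / delta <= \int dt / |y - w(t)|^2; when
   rho <= 2 r the window lies in [-4r, 4r].  The integrand is therefore
   dominated by (2r)^-1 \int_{-4r}^{4r} |f(y)| / |y - w(t)|^2 dt.  By Tonelli
   the y-integral may be taken first, and it is at most ||f||_{K_2} for each t,
   which yields the bound with C = 4. *)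

Section product_measure_sigma_finite.
Local Open Scope ereal_scope.
Context d1 d2 (T1 : measurableType d1) (T2 : measurableType d2) (R : realType).

Lemma sigma_finite_product_measure1 (m1 : {measure set T1 -> \bar R})
    (m2 : {sigma_finite_measure set T2 -> \bar R}) :
  sigma_finite setT m1 -> sigma_finite setT (m1 \x m2).
Proof.
move=> /sigma_finiteP[F [FT ndF Ffin]].
have /sigma_finiteP[G [GT ndG Gfin]] := sigma_finiteT m2.
exists (fun n => F n `*` G n); last first.
  move=> n; have [mFn Fnoo] := Ffin n; have [mGn Gnoo] := Gfin n.
  split; first exact: measurableX.
  by rewrite product_measure1E // lte_mul_pinfty // ge0_fin_numE.
apply/seteqP; split=> // -[a b] _.
have [i _ Fia] : (\bigcup_i F i) a by rewrite -FT.
have [j _ Gjb] : (\bigcup_j G j) b by rewrite -GT.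
exists (maxn i j) => //; split.
- exact: subsetPset (ndF _ _ (leq_maxl i j)) _ Fia.
- exact: subsetPset (ndG _ _ (leq_maxr i j)) _ Gjb.
Qed.

End product_measure_sigma_finite.

Section lebesgue3.
Variable R : realType.

Lemma sigma_finite_leb3 : sigma_finite setT (@leb3 R).
Proof. by do 2 apply: sigma_finite_product_measure1; exact: sigma_finiteT. Qed.

HB.instance Definition _ := Measure.on (@leb3 R).
HB.instance Definition _ :=
  Measure_isSigmaFinite.Build _ _ _ (@leb3 R) sigma_finite_leb3.

End lebesgue3.

Lemma ge0_le_integral_nonmeasurable d (T : measurableType d) (R : realType)
    (mu : {measure set T -> \bar R}) (D : set T) (f g : T -> \bar R) :
  (forall x, D x -> (0 <= f x)%E) -> (forall x, D x -> (f x <= g x)%E) ->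
  (\int[mu]_(x in D) f x <= \int[mu]_(x in D) g x)%E.
Proof.
move=> f_ge0 fg; rewrite !ge0_integralE //; last first.
  by move=> x Dx; exact: le_trans (f_ge0 x Dx) (fg x Dx).
apply: ereal_sup_le => _ /= [h hf <-]; exists h => // x.
apply: le_trans (hf x) _; rewrite /patch; case: ifP => // /set_mem; exact: fg.
Qed.

Lemma measurable_invr (R : realType) : measurable_fun [set: R] (@GRing.inv R).
Proof.
have mN0 : measurable [set x : R | x != 0] := open_measurable (@open_neq R 0).
have -> : [set: R] = [set x | x != 0] `|` [set 0].
  by apply/seteqP; split=> x // _; case: (eqVneq x 0) => [->|]; [right|left].
apply/measurable_funU => //; split; last exact: measurable_fun_set1.
apply: open_continuous_measurable_fun; first exact: open_neq.
by move=> x /set_mem; exact: inv_continuous.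
Qed.

Lemma measurable_normr_div d (T : measurableType d) (R : realType) (f g : T -> R) :
  measurable_fun setT f -> measurable_fun setT g ->
  measurable_fun setT (fun x => `|f x| / g x).
Proof.
move=> mf mg; apply: measurable_funM; first exact: measurableT_comp mf.
exact: measurableT_comp (@measurable_invr R) mg.
Qed.

Lemma lebesgue_integral_indic_itv (R : realType) (a b : R) : a <= b ->
  (\int[lebesgue_measure]_t (\1_`[a, b] t)%:E = (b - a)%:E)%E.
Proof.
move=> ab; rewrite integral_indic // setIT.
have /= -> := lebesgue_measure_itv `[a, b]; rewrite lte_fin.
case: ltP => [_ | ba]; first by rewrite EFinB.
suff -> : b = a by rewrite subrr.
by apply/le_anti; rewrite ba ab.
Qed.

Lemma le_integral_window (R : realType) (a d c : R) (g : R -> \bar R) :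
  0 < d -> 0 <= c -> (forall t, (0 <= g t)%E) ->
  (forall t, `[a - d, a + d]%classic t -> ((c / (d ^+ 2 + (t - a) ^+ 2))%:E <= g t)%E) ->
  ((c / d)%:E <= \int[lebesgue_measure]_t g t)%E.
Proof.
move=> d_gt0 c_ge0 g_ge0 g_window.
have -> : c / d = c / (2 * d ^+ 2) * (a + d - (a - d)) by field; rewrite gt_eqF.
rewrite EFinM -lebesgue_integral_indic_itv; last lra.
rewrite -ge0_integralZl_EFin //; last 2 first.
- by apply/measurable_EFinP; exact: measurable_indic.
- by rewrite divr_ge0 // mulr_ge0 // sqr_ge0.
apply: ge0_le_integral_nonmeasurable => t _.
  by rewrite -EFinM lee_fin mulr_ge0 // divr_ge0 // mulr_ge0 // sqr_ge0.
rewrite -EFinM indicE.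
have [t_window | _] := boolP (t \in `[a - d, a + d]%classic); last by rewrite mulr0.
apply: le_trans (g_window t (set_mem t_window)); rewrite mulr1 lee_fin ler_wpM2l //.
move: t_window; rewrite inE /= in_itv /= => /andP[ta at'].
rewrite lef_pV2 ?posrE; [nra | nra | ].
by have := sqr_ge0 (t - a); nra.
Qed.

Section elliptic_coordinates.
Context {R : realType}.
Implicit Types (x y z u v w : R3 R) (t : R) (f : R3 R -> R).

Lemma dot3_ge0 u : 0 <= dot3 u u.
Proof. rewrite /dot3; nra. Qed.

Lemma dist3_ge0 u v : 0 <= dist3 u v.
Proof. exact: sqrtr_ge0. Qed.

Lemma sqr_dist3 u v : dist3 u v ^+ 2 = dot3 (sub3 u v) (sub3 u v).
Proof. by rewrite sqr_sqrtr // dot3_ge0. Qed.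

Definition mid3 x z : R3 R :=
  pt ((c1 x + c1 z) / 2) ((c2 x + c2 z) / 2) ((c3 x + c3 z) / 2).

Definition axis_pt x z t : R3 R :=
  let m := mid3 x z in let r := dist3 x z in
  pt (c1 m + t * (c1 z - c1 x) / r) (c2 m + t * (c2 z - c2 x) / r)
     (c3 m + t * (c3 z - c3 x) / r).

Definition axis_dist2 x z y : R :=
  dot3 (sub3 y (mid3 x z)) (sub3 y (mid3 x z)) - ell_y1 x z y ^+ 2.

Lemma ell_y1E x z y : 0 < dist3 x z ->
  ell_y1 x z y = (dist3 x y ^+ 2 - dist3 y z ^+ 2) / (2 * dist3 x z).
Proof.
move=> r_gt0; rewrite /ell_y1 -/(mid3 x z) !sqr_dist3.
by rewrite /dot3 /sub3 /mid3 /pt /c1 /c2 /c3 /=; field; rewrite gt_eqF.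
Qed.

Lemma axis_dist2E x z y : axis_dist2 x z y =
  (dist3 x y ^+ 2 + dist3 y z ^+ 2) / 2 - dist3 x z ^+ 2 / 4 - ell_y1 x z y ^+ 2.
Proof.
rewrite /axis_dist2 !sqr_dist3; congr (_ - _).
by rewrite /dot3 /sub3 /mid3 /pt /c1 /c2 /c3 /=; field.
Qed.

Lemma sqr_dist3_axis_pt x z y t : 0 < dist3 x z ->
  dist3 y (axis_pt x z t) ^+ 2 = axis_dist2 x z y + (t - ell_y1 x z y) ^+ 2.
Proof.
move=> r_gt0; have r_neq0 : dist3 x z != 0 by rewrite gt_eqF.
rewrite /axis_dist2 /ell_y1 -/(mid3 x z) sqr_dist3 /axis_pt; have := sqr_dist3 x z.
move: r_neq0; move: (dist3 x z) => r r_neq0.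
rewrite /dot3 /sub3 /mid3 /pt /c1 /c2 /c3 /=.
set S := (_ * _ + _ * _ + _ * _) => r2.
have S1 : S / r ^+ 2 = 1 by rewrite -r2 divff // sqrf_eq0.
(* the coefficient of t^2 is |z - x|^2 / r^2 = 1 *)
by rewrite -[RHS]addr0 -(subrr (t ^+ 2 * (S / r ^+ 2))) {2}S1 /S; field.
Qed.

Definition ell_denom x z y : R :=
  dist3 x z * Num.sqrt (ell_rho x z y ^+ 2 - dist3 x z ^+ 2) * ell_sin_theta x z y.

Lemma ell_denom_ge0 x z y : 0 <= ell_denom x z y.
Proof. by rewrite /ell_denom !mulr_ge0 ?sqrtr_ge0 ?dist3_ge0. Qed.

Lemma ell_sin_theta_identity x z y : 0 < dist3 x z -> ell_rho x z y != 0 ->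
  (ell_rho x z y ^+ 2 - dist3 x z ^+ 2) * (1 - ell_cos_theta x z y ^+ 2) =
  4 * axis_dist2 x z y.
Proof.
move=> r_gt0; rewrite /ell_cos_theta axis_dist2E ell_y1E // /ell_rho => rho_neq0.
by field; rewrite rho_neq0 gt_eqF.
Qed.

Lemma ell_denomE x z y : 0 < dist3 x z ->
  ell_denom x z y = 0 \/
  0 < axis_dist2 x z y /\ ell_denom x z y = 2 * dist3 x z * Num.sqrt (axis_dist2 x z y).
Proof.
move=> r_gt0; rewrite /ell_denom /ell_sin_theta.
set u := _ - _; set v := 1 - _.
have [u_le0 | u_gt0] := lerP u 0; first by left; rewrite (ler0_sqrtr u_le0) mulr0 mul0r.
have [v_le0 | v_gt0] := lerP v 0; first by left; rewrite (ler0_sqrtr v_le0) mulr0.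
have rho_neq0 : ell_rho x z y != 0.
  by apply: contraTneq u_gt0; rewrite /u => ->; rewrite -leNgt; nra.
have uv : u * v = 4 * axis_dist2 x z y by exact: ell_sin_theta_identity.
right; split; first by rewrite -(@pmulr_rgt0 _ 4) // -uv mulr_gt0.
rewrite -mulrA -sqrtrM ?ltW // uv sqrtrM // (_ : 4 = 2 ^+ 2); last by rewrite -natrX.
by rewrite sqrtr_sqr ger0_norm // mulrCA mulrA.
Qed.

Lemma ell_window_bounds x z y : 0 < dist3 x z -> ell_rho x z y <= 2 * dist3 x z ->
  `|ell_y1 x z y| <= 2 * dist3 x z /\ axis_dist2 x z y <= 4 * dist3 x z ^+ 2.
Proof.
move=> r_gt0; rewrite axis_dist2E /ell_rho.
have : ell_y1 x z y * (2 * dist3 x z) = dist3 x y ^+ 2 - dist3 y z ^+ 2.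
  by rewrite ell_y1E // mulfVK // gt_eqF // mulr_gt0.
have [a_ge0 b_ge0] := (dist3_ge0 x y, dist3_ge0 y z).
move: (ell_y1 x z y) (dist3 x y) (dist3 y z) (dist3 x z) a_ge0 b_ge0 r_gt0.
move=> Y a b r a_ge0 b_ge0 r_gt0 Y_eq ab_le.
have : `|a ^+ 2 - b ^+ 2| <= 4 * r ^+ 2 by rewrite ler_norml; apply/andP; split; nra.
rewrite -Y_eq normrM (gtr0_norm (_ : 0 < 2 * r)) ?mulr_gt0 // => Yr.
split; first by rewrite -(ler_pM2r (_ : 0 < 2 * r)) ?mulr_gt0 //; nra.
by have := sqr_ge0 Y; nra.
Qed.

Lemma K2norm_ge0 f : (0 <= K2norm f)%E.
Proof.
apply: le_trans (ereal_sup_ubound (ex_intro2 _ _ (pt 0 0 0) I erefl)).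
by apply: integral_ge0 => y _; rewrite lee_fin divr_ge0 // sqr_ge0.
Qed.

Definition axis_itv x z : set R := `[- (4 * dist3 x z), 4 * dist3 x z]%classic.

Definition axis_kernel f x z (p : R3 R * R) : \bar R :=
  (\1_(axis_itv x z) p.2 / (2 * dist3 x z) *
   (`|f p.1| / dist3 p.1 (axis_pt x z p.2) ^+ 2))%:E.

Lemma axis_kernel_ge0 f x z p : (0 <= axis_kernel f x z p)%E.
Proof. by rewrite lee_fin mulr_ge0 ?divr_ge0 ?mulr_ge0 ?sqr_ge0 ?dist3_ge0. Qed.

Ltac measurable_poly := repeat first
  [ apply: measurable_funB | apply: measurable_funD | apply: measurable_funM
  | apply: measurable_cst | exact: measurable_fst | exact: measurable_snd
  | apply: (measurableT_comp measurable_fst)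
  | apply: (measurableT_comp measurable_snd) ].

Lemma measurable_K2_integrand f w : measurable_fun setT f ->
  measurable_fun setT (fun y => (`|f y| / dist3 y w ^+ 2)%:E).
Proof.
move=> mf; apply/measurable_EFinP; apply: measurable_normr_div mf _.
rewrite (_ : (fun y => _) = fun y => dot3 (sub3 y w) (sub3 y w)); last first.
  by apply/funext => y; rewrite sqr_dist3.
by rewrite /dot3 /sub3 /pt /c1 /c2 /c3 /=; measurable_poly.
Qed.

Lemma measurable_axis_kernel f x z : measurable_fun setT f ->
  measurable_fun setT (axis_kernel f x z).
Proof.
move=> mf; apply/measurable_EFinP; apply: measurable_funM.
  apply: measurable_funM (measurable_cst _).
  exact: measurableT_comp (measurable_indic (measurable_itv _)) measurable_snd.
apply: measurable_normr_div; first exact: measurableT_comp mf measurable_fst.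
rewrite (_ : (fun p => _) = fun p : R3 R * R =>
    dot3 (sub3 p.1 (axis_pt x z p.2)) (sub3 p.1 (axis_pt x z p.2))); last first.
  by apply/funext => p; rewrite sqr_dist3.
by rewrite /axis_pt /mid3 /dot3 /sub3 /pt /c1 /c2 /c3 /=; measurable_poly.
Qed.

Lemma ell_integrand_le_axis_kernel f x z y :
  0 < dist3 x z -> ell_rho x z y <= 2 * dist3 x z ->
  ((`|f y| / ell_denom x z y)%:E <=
   \int[lebesgue_measure]_t axis_kernel f x z (y, t))%E.
Proof.
move=> r_gt0 rho_le.
have [-> | [D_gt0 ->]] := ell_denomE x z y r_gt0.
  (* a vanishing denominator makes the integrand |f y| / 0 = 0 *)
  by rewrite invr0 mulr0; apply: integral_ge0 => t _; exact: axis_kernel_ge0.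
have [Y_le D_le] := ell_window_bounds x z y r_gt0 rho_le.
rewrite /axis_kernel; under eq_integral do rewrite /= sqr_dist3_axis_pt //.
set r := dist3 x z in r_gt0 Y_le D_le *.
move: (ell_y1 x z y) (axis_dist2 x z y) Y_le D_le D_gt0 => Y D Y_le D_le D_gt0.
rewrite ler_norml in Y_le.
set d := Num.sqrt D; have d_gt0 : 0 < d by rewrite sqrtr_gt0.
have dE : d ^+ 2 = D by rewrite sqr_sqrtr // ltW.
have d_le : d <= 2 * r by nra.
have -> : `|f y| / (2 * r * d) = `|f y| / (2 * r) / d.
  by field; rewrite !gt_eqF.
apply: (@le_integral_window _ Y) => //; first by rewrite divr_ge0 // ltW // mulr_gt0.
  by move=> t; rewrite lee_fin mulr_ge0 ?divr_ge0 ?mulr_ge0 ?addr_ge0 ?sqr_ge0 // ltW.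
move=> t; rewrite /= in_itv /= => /andP[t_ge t_le].
have t_itv : t \in axis_itv x z.
  by rewrite inE /axis_itv -/r /= in_itv /=; apply/andP; split; lra.
rewrite indicE t_itv mul1r dE lee_fin le_eqVlt; apply/orP; left; apply/eqP.
have := sqr_ge0 (t - Y) => tY_ge0.
by field; rewrite !gt_eqF //; lra.
Qed.

Lemma integral_axis_kernel_le f x z t : measurable_fun setT f ->
  (\int[@leb3 R]_y axis_kernel f x z (y, t) <=
   (\1_(axis_itv x z) t / (2 * dist3 x z))%:E * K2norm f)%E.
Proof.
move=> mf; have weight_ge0 : 0 <= \1_(axis_itv x z) t / (2 * dist3 x z).
  by rewrite divr_ge0 // mulr_ge0 // dist3_ge0.
rewrite /axis_kernel; under eq_integral do rewrite /= EFinM.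
rewrite ge0_integralZl_EFin //; last 2 first.
- by move=> y _; rewrite lee_fin divr_ge0 // sqr_ge0.
- exact: measurable_K2_integrand _ mf.
rewrite lee_wpmul2l ?lee_fin //.
by apply: ereal_sup_ubound; exists (axis_pt x z t).
Qed.

Lemma integral_axis_weight x z : 0 < dist3 x z ->
  (\int[lebesgue_measure]_t (\1_(axis_itv x z) t / (2 * dist3 x z))%:E = 4%:E)%E.
Proof.
move=> r_gt0; under eq_integral do rewrite mulrC EFinM.
rewrite ge0_integralZl_EFin //; last 2 first.
- by apply/measurable_EFinP; exact: measurable_indic (measurable_itv _).
- by rewrite invr_ge0 mulr_ge0 // ltW.
rewrite lebesgue_integral_indic_itv; last lra.
by rewrite -EFinM; congr EFin; field; rewrite gt_eqF.
Qed.

End elliptic_coordinates.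

Theorem lemma5 (R : realType) :
  exists C : R, forall (x z : R3 R), 0 < dist3 x z ->
  forall f : R3 R -> R, inK2 f ->
  (\int[@leb3 R]_(y in [set y | (ell_rho x z y <= 2 * dist3 x z)%R])
      ((`|f y| / (dist3 x z * Num.sqrt (ell_rho x z y ^+ 2 - dist3 x z ^+ 2)
                  * ell_sin_theta x z y))%:E)
   <= C%:E * K2norm f)%E.
Proof.
exists 4 => x z r_gt0 f [mf _].
have kernel_ge0 := axis_kernel_ge0 f x z.
rewrite -(integral_axis_weight x z r_gt0) -ge0_integralZr //; last 3 first.
- apply/measurable_EFinP; apply: measurable_funM (measurable_cst _).
  exact: measurable_indic (measurable_itv _).
- by move=> t _; rewrite lee_fin divr_ge0 // ltW // mulr_gt0.
- exact: K2norm_ge0.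
apply: (@le_trans _ _ (\int[@leb3 R]_y \int[lebesgue_measure]_t axis_kernel f x z (y, t))%E).
  rewrite integral_mkcond; apply: ge0_le_integral_nonmeasurable => y _.
    by rewrite patchE; case: ifP => // _; rewrite lee_fin divr_ge0 // ell_denom_ge0.
  rewrite patchE; case: ifPn => [/set_mem | _]; first exact: ell_integrand_le_axis_kernel.
  by apply: integral_ge0 => t _.
rewrite fubini_tonelli //; last exact: measurable_axis_kernel.
apply: ge0_le_integral_nonmeasurable => t _; first exact: integral_ge0.
exact: integral_axis_kernel_le.
Qed.
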